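(* Let $R>0$, let $\mathcal K$ be a nonempty closed subset of $S^{d-1}$ contained in a hemisphere $\{v\in S^{d-1}:\langle v,w\rangle\ge0\}$ for some $w\in S^{d-1}$, and let $\mathcal N=\mathrm{Nor}(C_{\mathcal K},o)\cap S^{d-1}$. The following are equivalent: (a) $\mathcal K$ is spherically convex; (b) $\mathrm{reach}(C_{\mathcal K})\ge R$; (c) $C_{\mathcal K}=C_{\mathcal N}$.
   Context: $S^{d-1}$ is the unit sphere, $o$ the origin, $B(x)=\{y:|y-x|<R\}$, $co(\cdot)$ the convex hull. For $\mathcal K\subset S^{d-1}$, $C_{\mathcal K}=\bigcap_{v\in\mathcal K}(\mathbb{R}^d\setminus B(Rv))$ is the $R$-cone with vertex $o$. With $K=\{\lambda v:\lambda\ge0,v\in\mathcal K\}$, the spherical convex hull is $co_{sph}(\mathcal K)=co(K)\cap S^{d-1}$, and $\mathcal K$ is spherically convex if $co_{sph}(\mathcal K)=\mathcal K$. Tangent cone: $\mathrm{Tan}(A,q)=\{v: \forall\varepsilon>0\ \exists x\in A,\ |x-q|<\varepsilon,\ \exists r>0,\ |r(x-q)-v|<\varepsilon\}$; normal cone: $\mathrm{Nor}(A,q)=\{u:\langle u,v\rangle\le0\ \forall v\in\mathrm{Tan}(A,q)\}$. $\mathrm{Unp}(A)$ is the set of points with a unique nearest point in $A$; $\mathrm{reach}(A,a)=\sup\{\rho>0:\{x:|x-a|<\rho\}\subset\mathrm{Unp}(A)\}$, $\mathrm{reach}(A)=\inf_{a\in A}\mathrm{reach}(A,a)$. *)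

From HB Require Import structures.
From mathcomp Require Import all_boot all_order all_algebra.
From mathcomp Require Import all_classical all_reals ereal.
Set Implicit Arguments. Unset Strict Implicit. Unset Printing Implicit Defensive.
Import Order.TTheory GRing.Theory Num.Theory.
Local Open Scope classical_set_scope.
Local Open Scope ring_scope.

Section Defs.
Variables (R : realType) (d : nat).
Notation V := 'rV[R]_d.

Definition dotp (u v : V) : R := \sum_(i < d) u ord0 i * v ord0 i.
Definition enorm (u : V) : R := Num.sqrt (dotp u u).

(* origin o is the zero vector 0 *)
Definition sphere : set V := [set v | enorm v = 1].

Definition eball (x : V) (r : R) : set V := [set y | enorm (y - x) < r].

Definition eclosed (A : set V) : Prop :=
  forall x, (forall e, 0 < e -> exists2 a, A a & enorm (a - x) < e) -> A x.

Definition Rcone (r : R) (K : set V) : set V :=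
  \bigcap_(v in K) ~` eball (r *: v) r.

Definition convex_set (C : set V) : Prop :=
  forall x y t, C x -> C y -> 0 <= t -> t <= 1 -> C (t *: x + (1 - t) *: y).

Definition conv (A : set V) : set V :=
  [set x | forall C, convex_set C -> A `<=` C -> C x].

Definition pos_hull (K : set V) : set V :=
  [set x | exists2 l, 0 <= l & exists2 v, K v & x = l *: v].

Definition co_sph (K : set V) : set V := conv (pos_hull K) `&` sphere.

Definition sph_convex (K : set V) : Prop := co_sph K = K.

Definition Tan (A : set V) (q : V) : set V :=
  [set v | forall e, 0 < e -> exists2 x, A x /\ enorm (x - q) < e &
             exists2 r, 0 < r & enorm (r *: (x - q) - v) < e].

Definition Nor (A : set V) (q : V) : set V :=
  [set u | forall v, Tan A q v -> dotp u v <= 0].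

Definition Unp (A : set V) : set V :=
  [set x | exists! a, A a /\ forall b, A b -> enorm (x - a) <= enorm (x - b)].

Definition reach_at (A : set V) (a : V) : \bar R :=
  ereal_sup [set rho%:E | rho in [set rho : R | 0 < rho /\ eball a rho `<=` Unp A]].

Definition reach (A : set V) : \bar R := ereal_inf [set reach_at A a | a in A].

End Defs.

From HB Require Import structures.
From mathcomp Require Import all_boot all_order all_algebra.
From mathcomp Require Import all_classical all_reals ereal.
From mathcomp Require Import topology normedtype derive matrix_normedtype.
From mathcomp Require Import ring lra.
Import numFieldTopology.Exports numFieldNormedType.Exports.
Import Order.TTheory GRing.Theory Num.Theory.
Set Implicit Arguments. Unset Strict Implicit. Unset Printing Implicit Defensive.
Local Open Scope classical_set_scope.
Local Open Scope ring_scope.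

(* Write [C] for [C_K]. Everything rests on a first-order condition:
   if [K] is spherically convex and [v0] maximises [<y, .>] over [K] with
   [<y, v0> >= 0], then [y - <y, v0> v0] is polar to [K], and polar vectors are
   tangent to [C] at [o].
   (a) -> (c): applied to a unit normal [u] of [C] at [o], the condition forces
   [u = v0], so [N] is contained in [K]; conversely [K] is contained in [N].
   (c) -> (a): [N] is spherically convex since normal cones are convex cones, and
   a unit [v] lies in [K] as soon as [B(r v)] misses [C].
   (a) -> (b): for [y] outside [C] with [v0] as above, the condition puts the point
   of the sphere bounding [B(r v0)] on the ray from [r v0] through [y] in [C]; it
   is the unique nearest point of [C] to [y].
   (b) -> (a): for [z] in [co_sph K] but not in [K], the projection [p] of [z]
   onto the closed convex hull of [K] has [|p| < 1], and [r p] has two nearest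
   points in [C] at distance [r |p| < r], namely [o] and a multiple of [z - p]. *)

Section Euclidean.
Variables (R : realType) (d : nat).
Local Notation V := 'rV[R]_d.
Local Notation dp := (@dotp R d).
Local Notation en := (@enorm R d).

Lemma dotpC (u v : V) : dp u v = dp v u.
Proof. by apply: eq_bigr => i _; rewrite mulrC. Qed.

Lemma dotpDl (u v w : V) : dp (u + v) w = dp u w + dp v w.
Proof. by rewrite /dotp -big_split; apply: eq_bigr => i _; rewrite mxE mulrDl. Qed.

Lemma dotpZl a (u w : V) : dp (a *: u) w = a * dp u w.
Proof. by rewrite /dotp mulr_sumr; apply: eq_bigr => i _; rewrite mxE mulrA. Qed.

Lemma dotpNl (u w : V) : dp (- u) w = - dp u w.
Proof. by rewrite -scaleN1r dotpZl mulN1r. Qed.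

Lemma dotpBl (u v w : V) : dp (u - v) w = dp u w - dp v w.
Proof. by rewrite dotpDl dotpNl. Qed.

Lemma dotpDr (u v w : V) : dp w (u + v) = dp w u + dp w v.
Proof. by rewrite dotpC dotpDl !(dotpC w). Qed.

Lemma dotpZr a (u w : V) : dp w (a *: u) = a * dp w u.
Proof. by rewrite dotpC dotpZl dotpC. Qed.

Lemma dotpBr (u v w : V) : dp w (u - v) = dp w u - dp w v.
Proof. by rewrite !(dotpC w) dotpBl. Qed.

Lemma dotp0l (u : V) : dp 0 u = 0.
Proof. by rewrite -(scale0r 0) dotpZl mul0r. Qed.

Lemma dotp0r (u : V) : dp u 0 = 0.
Proof. by rewrite dotpC dotp0l. Qed.

Lemma dotpp_ge0 (u : V) : 0 <= dp u u.
Proof. by apply: sumr_ge0 => i _; rewrite -expr2 sqr_ge0. Qed.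

Lemma dotpp_eq0 (u : V) : (dp u u == 0) = (u == 0).
Proof.
apply/idP/eqP => [|->]; last by rewrite dotp0l.
rewrite psumr_eq0 => [/allP u0|i _]; last by rewrite -expr2 sqr_ge0.
apply/rowP => i; rewrite mxE; have := u0 i (mem_index_enum i).
by rewrite /= mulf_eq0 orbb => /eqP.
Qed.

Lemma dotpp_gt0 (u : V) : u != 0 -> 0 < dp u u.
Proof. by rewrite lt_def dotpp_ge0 dotpp_eq0 andbT. Qed.

Lemma dotppD (u v : V) : dp (u + v) (u + v) = dp u u + 2 * dp u v + dp v v.
Proof. rewrite dotpDl !dotpDr (dotpC v u); ring. Qed.

Lemma dotppB (u v : V) : dp (u - v) (u - v) = dp u u - 2 * dp u v + dp v v.
Proof. rewrite dotpBl !dotpBr (dotpC v u); ring. Qed.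

Lemma enorm_ge0 (u : V) : 0 <= en u.
Proof. exact: sqrtr_ge0. Qed.

Lemma enorm_sqr (u : V) : en u ^+ 2 = dp u u.
Proof. by rewrite sqr_sqrtr // dotpp_ge0. Qed.

Lemma enorm0 : en 0 = 0.
Proof. by rewrite /enorm dotp0l sqrtr0. Qed.

Lemma enorm_eq0 (u : V) : (en u == 0) = (u == 0).
Proof. by rewrite -dotpp_eq0 -enorm_sqr sqrf_eq0. Qed.

Lemma enormZ a (u : V) : en (a *: u) = `|a| * en u.
Proof.
by rewrite /enorm dotpZl dotpZr mulrA -expr2 sqrtrM ?sqr_ge0 // sqrtr_sqr.
Qed.

Lemma enormN (u : V) : en (- u) = en u.
Proof. by rewrite -scaleN1r enormZ normrN1 mul1r. Qed.

Lemma enormB (u v : V) : en (u - v) = en (v - u).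
Proof. by rewrite -enormN opprB. Qed.

Lemma enorm_unit (u : V) : sphere u <-> dp u u = 1.
Proof.
split => [u1|u1]; first by rewrite -enorm_sqr u1 expr1n.
by rewrite /sphere /= /enorm u1 sqrtr1.
Qed.

Lemma ler_enorm (u v : V) : (en u <= en v) = (dp u u <= dp v v).
Proof. by rewrite -(@ler_pXn2r _ 2) ?nnegrE ?enorm_ge0 // !enorm_sqr. Qed.

Lemma enorm_le (u : V) a : 0 <= a -> (en u <= a) = (dp u u <= a ^+ 2).
Proof. by move=> a0; rewrite -(@ler_pXn2r _ 2) ?nnegrE ?enorm_ge0 // enorm_sqr. Qed.

Lemma enorm_lt (u : V) a : 0 <= a -> (en u < a) = (dp u u < a ^+ 2).
Proof. by move=> a0; rewrite -(@ltr_pXn2r _ 2) ?nnegrE ?enorm_ge0 // enorm_sqr. Qed.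

Lemma enorm_ge (u : V) a : 0 <= a -> (a <= en u) = (a ^+ 2 <= dp u u).
Proof. by move=> a0; rewrite leNgt enorm_lt // -leNgt. Qed.

Lemma cauchy_schwarz (u v : V) : `|dp u v| <= en u * en v.
Proof.
rewrite -(@ler_pXn2r _ 2) ?nnegrE ?mulr_ge0 ?enorm_ge0 // exprMn !enorm_sqr.
have [->|v0] := eqVneq v 0; first by rewrite !dotp0r normr0 expr0n mulr0.
have := dotpp_ge0 (dp v v *: u - dp u v *: v).
rewrite dotppB !dotpZl !dotpZr => h.
rewrite real_normK ?num_real //.
have := dotpp_gt0 v0; nra.
Qed.

Lemma dotp_le (u v : V) : dp u v <= en u * en v.
Proof. exact: le_trans (ler_norm _) (cauchy_schwarz u v). Qed.

Lemma dotp_le_unit (u v : V) : sphere v -> dp u v <= en u.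
Proof. by move=> v1; rewrite -[leRHS]mulr1 -v1 dotp_le. Qed.

Lemma dotp_ge_unit (u v : V) : sphere v -> - en u <= dp u v.
Proof.
by move=> v1; have := cauchy_schwarz u v; rewrite v1 mulr1 ler_norml => /andP[].
Qed.

Lemma enormD (u v : V) : en (u + v) <= en u + en v.
Proof.
rewrite enorm_le ?addr_ge0 ?enorm_ge0 // dotppD -!enorm_sqr.
have := dotp_le u v; nra.
Qed.

Lemma enorm_dist_tri (u v w : V) : en (u - w) <= en (u - v) + en (v - w).
Proof. by have := enormD (u - v) (v - w); rewrite addrA subrK. Qed.

Lemma enormD_eq (p q : V) : en p + en q <= en (p + q) -> 0 < en q ->
  p = (en p / en q) *: q.
Proof.
move=> pq q0.
have pqE : dp p q = en p * en q.
  apply/eqP; rewrite eq_le dotp_le /=.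
  move: pq; rewrite -(@ler_pXn2r _ 2) ?nnegrE ?addr_ge0 ?enorm_ge0 //.
  by rewrite enorm_sqr dotppD -!enorm_sqr; lra.
have /eqP : dp (en q *: p - en p *: q) (en q *: p - en p *: q) = 0.
  by rewrite dotppB !dotpZl !dotpZr pqE -!enorm_sqr; ring.
rewrite dotpp_eq0 subr_eq0 => /eqP pqE'.
apply: (@scalerI _ _ (en q)); first by rewrite gt_eqF.
by rewrite pqE' scalerA mulrCA mulfV ?gt_eqF // mulr1.
Qed.

End Euclidean.

Section Compactness.
Variables (R : realType) (d : nat).
Local Notation V := 'rV[R]_d.
Local Notation en := (@enorm R d).

Lemma coord_le_enorm (x : V) i : `|x ord0 i| <= en x.
Proof.
rewrite -(@ler_pXn2r _ 2) ?nnegrE ?enorm_ge0 // enorm_sqr /dotp (bigD1 i) //=.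
rewrite real_normK ?num_real //.
by rewrite lerDl; apply: sumr_ge0 => j _; rewrite -expr2 sqr_ge0.
Qed.

Lemma mxnorm_le_enorm (x : V) : `|x| <= en x.
Proof.
rewrite [leLHS]/Num.norm /= mx_normrE; apply: bigmax_le => [|[i j] _].
  exact: enorm_ge0.
by rewrite /= (ord1 i); exact: coord_le_enorm.
Qed.

Lemma enorm_le_mxnorm (x : V) : en x <= (d%:R + 1) * `|x|.
Proof.
have x0 := normr_ge0 x.
rewrite enorm_le ?mulr_ge0 ?addr_ge0 //.
have dpE : dotp x x <= \sum_(i < d) `|x| ^+ 2.
  apply: ler_sum => i _; rewrite -expr2 -real_normK ?num_real //.
  rewrite lerXn2r ?nnegrE ?normr_ge0 //.
  rewrite [leRHS]/Num.norm /= mx_normrE.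
  exact: (le_bigmax _ (fun ij => `|x ij.1 ij.2|) (ord0, i)).
apply: le_trans dpE _; rewrite sumr_const card_ord -mulr_natl exprMn.
have d0 : 0 <= d%:R :> R by [].
have := sqr_ge0 `|x|; nra.
Qed.

Lemma eclosed_closed (A : set V) : eclosed A -> closed A.
Proof.
move=> Acl x Ax; apply: Acl => e e0.
have dpos : 0 < d%:R + 1 :> R by rewrite ltr_wpDl.
have [a [Aa xa]] := Ax _ (nbhsx_ballx x _ (divr_gt0 e0 dpos)).
exists a => //; rewrite enormB; apply: le_lt_trans (enorm_le_mxnorm _) _.
by rewrite mulrC -ltr_pdivlMr //; move: xa; rewrite -ball_normE.
Qed.

Lemma lipschitz_continuous (f : V -> R) (L : R) :
  (forall x y, `|f x - f y| <= L * en (x - y)) -> continuous f.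
Proof.
move=> fL x B /= /(nbhs_ballP (f x)) [e e0 eB].
have M0 : 0 < (`|L| + 1) * (d%:R + 1) by rewrite mulr_gt0 // ltr_wpDl.
apply/nbhs_ballP; exists (e / ((`|L| + 1) * (d%:R + 1))); first by apply: divr_gt0.
move=> y; rewrite -ball_normE /ball_ /= ltr_pdivlMr // => xy.
apply: eB; rewrite -ball_normE /ball_ /=; apply: le_lt_trans (fL x y) _.
apply: le_lt_trans xy; rewrite mulrCA.
apply: (@le_trans _ _ (`|L| * en (x - y))).
  by rewrite ler_wpM2r ?enorm_ge0 ?ler_norm.
apply: ler_pM; rewrite ?normr_ge0 ?enorm_ge0 ?lerDl //.
by rewrite mulrC; exact: enorm_le_mxnorm.
Qed.

Lemma eclosed_bounded_argmax (A : set V) (f : V -> R) (L M : R) :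
  A !=set0 -> eclosed A -> (forall x, A x -> en x <= M) ->
  (forall x y, `|f x - f y| <= L * en (x - y)) ->
  exists2 c, A c & forall x, A x -> f x <= f c.
Proof.
move=> A0 Acl AM fL.
have Acp : compact A.
  apply: bounded_closed_compact; last exact: eclosed_closed.
  exists M; split; first exact: num_real.
  move=> M' MM' x Ax; apply: le_trans (mxnorm_le_enorm x) _.
  exact: le_trans (AM x Ax) (ltW MM').
have fc : {within A, continuous f}.
  by apply: continuous_subspaceT; exact: lipschitz_continuous fL.
have [c Ac cmax] := compact_EVT_max A0 Acp fc.
by exists c; [move: Ac; rewrite inE | move=> x Ax; apply: cmax; rewrite inE].
Qed.

End Compactness.

Lemma le0_of_small_multiples (R : realType) (X B : R) :
  (forall s, 0 < s -> s < 2^-1 -> X <= s * B) -> X <= 0.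
Proof.
move=> XB; rewrite leNgt; apply/negP => X0.
set b := `|B| + 1.
have b0 : 0 < b by rewrite ltr_wpDl.
have Bb : B <= b by rewrite (le_trans (ler_norm B)) // lerDl.
set s := Num.min (4^-1) (X / (2 * b)).
have s0 : 0 < s by rewrite lt_min invr_gt0 ltr0n divr_gt0 ?mulr_gt0.
have s4 : s <= 4^-1 by rewrite ge_min lexx.
have sX : s * (2 * b) <= X by rewrite -ler_pdivlMr ?mulr_gt0 // ge_min lexx orbT.
have /XB : s < 2^-1.
  by apply: le_lt_trans s4 _; rewrite ltf_pV2 ?posrE ?ltr_nat.
have : s * B <= s * b by rewrite ler_pM2l.
nra.
Qed.

Section Convexity.
Variables (R : realType) (d : nat).
Local Notation V := 'rV[R]_d.
Local Notation dp := (@dotp R d).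
Local Notation en := (@enorm R d).

Definition eclosure (A : set V) : set V :=
  [set x | forall e, 0 < e -> exists2 a, A a & en (a - x) < e].

Definition polar (A : set V) : set V := [set t | forall v, A v -> dp t v <= 0].

Lemma polarZ (A : set V) a t : 0 <= a -> polar A t -> polar A (a *: t).
Proof. by move=> a0 At v Av; rewrite dotpZl mulr_ge0_le0 // At. Qed.

Lemma sub_eclosure (A : set V) : A `<=` eclosure A.
Proof. by move=> x Ax e e0; exists x; rewrite // subrr enorm0. Qed.

Lemma eclosure_sub (A B : set V) : eclosed B -> A `<=` B -> eclosure A `<=` B.
Proof.
by move=> Bcl AB x Ax; apply: Bcl => e /Ax [a /AB Ba ax]; exists a.
Qed.

Lemma eclosure_eclosed (A : set V) : eclosed (eclosure A).
Proof.
move=> x Ax e e0; have e20 : 0 < e / 2 by rewrite divr_gt0.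
have [y Ay yx] := Ax _ e20; have [a Aa ay] := Ay _ e20.
by exists a => //; have := enorm_dist_tri a y x; lra.
Qed.

Lemma conv_sub (A B : set V) : convex_set B -> A `<=` B -> conv A `<=` B.
Proof. by move=> Bcvx AB x; apply. Qed.

Lemma sub_conv (A : set V) : A `<=` conv A.
Proof. by move=> x Ax B _; apply. Qed.

Lemma conv_convex (A : set V) : convex_set (conv A).
Proof.
by move=> x y t Ax Ay t0 t1 B Bcvx AB; exact: Bcvx (Ax B Bcvx AB) (Ay B Bcvx AB) t0 t1.
Qed.

Lemma convex_eclosure (A : set V) : convex_set A -> convex_set (eclosure A).
Proof.
move=> Acvx x y t Ax Ay t0 t1 e e0.
have [a Aa ax] := Ax e e0; have [b Ab bx] := Ay e e0.
exists (t *: a + (1 - t) *: b); first exact: Acvx.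
have -> : t *: a + (1 - t) *: b - (t *: x + (1 - t) *: y) =
          t *: (a - x) + (1 - t) *: (b - y).
  by rewrite !scalerBr opprD !addrA; congr (_ + _); rewrite addrAC.
apply: le_lt_trans (enormD _ _) _.
rewrite !enormZ ger0_norm // ger0_norm ?subr_ge0 //.
have [->|tn0] := eqVneq t 0; first by rewrite mul0r add0r subr0 mul1r.
have : t * en (a - x) < t * e by rewrite ltr_pM2l // lt_def tn0 t0.
have : (1 - t) * en (b - y) <= (1 - t) * e by rewrite ler_wpM2l ?subr_ge0 // ltW.
lra.
Qed.

Lemma halfspace_convex (a : V) c : convex_set [set x | dp a x <= c].
Proof.
move=> x y t /= ax ay t0 t1; rewrite dotpDr !dotpZr.
have : 0 <= 1 - t by rewrite subr_ge0.
nra.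
Qed.

Lemma halfspace_eclosed (a : V) c : eclosed [set x | dp a x <= c].
Proof.
move=> x xa /=; rewrite -subr_le0; apply: (@le0_of_small_multiples _ _ (en a)).
move=> s s0 _; have [y /= ya yx] := xa s s0.
have := dotp_le a (x - y); rewrite dotpBr enormB.
have : en a * en (y - x) <= s * en a by rewrite mulrC ler_wpM2r ?enorm_ge0 ?ltW.
lra.
Qed.

Lemma nearest_point_obtuse (A : set V) z p : convex_set A -> A p ->
  (forall x, A x -> en (z - p) <= en (z - x)) ->
  forall x, A x -> dp (z - p) (x - p) <= 0.
Proof.
move=> Acvx Ap pmin x Ax.
apply: (@le0_of_small_multiples _ _ (dp (x - p) (x - p) / 2)) => s s0 s2.
have /pmin : A (s *: x + (1 - s) *: p) by apply: Acvx => //; lra.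
have -> : z - (s *: x + (1 - s) *: p) = (z - p) - s *: (x - p).
  by apply/rowP => i; rewrite !mxE; ring.
rewrite ler_enorm (dotppB (z - p)) dotpZr dotpZl dotpZr => h.
have : s * (2 * dp (z - p) (x - p)) <= s * (s * dp (x - p) (x - p)) by nra.
rewrite ler_pM2l //; lra.
Qed.

(* A convex combination of [a *: k] and [b *: k'] is a nonnegative multiple of a
   convex combination of [k] and [k']. *)
Lemma conv_pos_hull_scale (A : set V) z : conv (pos_hull A) z ->
  exists2 a, 0 <= a & exists2 k, conv A k & z = a *: k.
Proof.
move=> /(_ [set x | exists2 a, 0 <= a & exists2 k, conv A k & x = a *: k]).
apply; last first.
  by move=> _ [l l0 [v Av ->]]; exists l => //; exists v => //; exact: sub_conv.
move=> _ _ t [a a0 [k Ak ->]] [b b0 [k' Ak' ->]] t0 t1.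
set c := t * a + (1 - t) * b.
have ta0 : 0 <= t * a by rewrite mulr_ge0.
have tb0 : 0 <= (1 - t) * b by rewrite mulr_ge0 ?subr_ge0.
have c0 : 0 <= c by rewrite addr_ge0.
have [c_eq0|cn0] := eqVneq c 0.
  have [ta tb] : t * a = 0 /\ (1 - t) * b = 0 by move: c_eq0; rewrite /c; lra.
  by exists 0 => //; exists k => //; rewrite !scalerA ta tb !scale0r addr0.
exists c => //; exists ((t * a / c) *: k + (1 - t * a / c) *: k').
  apply: conv_convex => //; first by rewrite divr_ge0 ?mulr_ge0.
  by rewrite ler_pdivrMr ?lt_def ?cn0 // mul1r lerDl mulr_ge0 // subr_ge0.
rewrite scalerDr !scalerA; congr (_ *: _ + _ *: _); rewrite /c; field.
  by rewrite -/c.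
by rewrite -/c.
Qed.

Lemma sph_convexW (A : set V) : A `<=` @sphere R d -> co_sph A `<=` A -> sph_convex A.
Proof.
move=> Asph coA; apply/seteqP; split => // v Av; split; last exact: Asph.
by apply: sub_conv; exists 1; rewrite ?ler01 //; exists v; rewrite ?scale1r.
Qed.

Lemma sph_convex_normalize (A : set V) a b s : sph_convex A -> A a -> A b ->
  0 <= s <= 1 -> let w := (1 - s) *: a + s *: b in w != 0 -> A ((en w)^-1 *: w).
Proof.
move=> Acvx Aa Ab /andP [s0 s1] w wn0.
have w0 : 0 < en w by rewrite lt_def enorm_eq0 wn0 enorm_ge0.
rewrite -Acvx; split; last first.
  by apply/enorm_unit; rewrite dotpZl dotpZr -enorm_sqr; field; rewrite gt_eqF.
have -> : (en w)^-1 *: w =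
          (1 - s) *: ((en w)^-1 *: a) + (1 - (1 - s)) *: ((en w)^-1 *: b).
  by rewrite /w scalerDr !scalerA !(mulrC (en w)^-1) opprB addrCA subrr addr0.
apply: conv_convex; rewrite ?subr_ge0 ?lerBlDr ?lerDl //.
  by apply: sub_conv; exists (en w)^-1; rewrite ?invr_ge0 ?ltW //; exists a.
by apply: sub_conv; exists (en w)^-1; rewrite ?invr_ge0 ?ltW //; exists b.
Qed.

Lemma Nor_convex (A : set V) q : convex_set (Nor A q).
Proof.
move=> x y t xN yN t0 t1 v Tv; rewrite dotpDl !dotpZl.
have := xN v Tv; have := yN v Tv; have : 0 <= 1 - t by rewrite subr_ge0.
nra.
Qed.

Lemma sph_convex_Nor (A : set V) : sph_convex (Nor A 0 `&` @sphere R d).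
Proof.
apply: sph_convexW => [u [] //|z [zN zsph]]; split => //.
apply: zN; first exact: Nor_convex.
move=> _ [l l0 [u [uN _] ->]] v Tv; rewrite dotpZl.
by apply: mulr_ge0_le0 => //; exact: uN.
Qed.

Lemma Unp_mem (A : set V) y : A y -> Unp A y.
Proof.
move=> Ay; exists y; split; first by split => // b _; rewrite subrr enorm0 enorm_ge0.
move=> x [_ /(_ y Ay)]; rewrite subrr enorm0 => yx.
have /eqP : en (y - x) = 0 by apply/eqP; rewrite eq_le yx enorm_ge0.
by rewrite enorm_eq0 subr_eq0 => /eqP.
Qed.

Lemma reach_le_dist (A : set V) a y : A a -> ~ Unp A y ->
  (reach A <= (en (y - a))%:E)%E.
Proof.
move=> Aa yU; apply: le_trans (ereal_inf_lbound _) _; first by exists a.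
apply: ge_ereal_sup => _ [rho [rho0 ballU] <-].
by rewrite lee_fin leNgt; apply/negP => ya; exact: yU (ballU y ya).
Qed.

Lemma reach_ge (A : set V) r : 0 < r -> (forall a, A a -> eball a r `<=` Unp A) ->
  (r%:E <= reach A)%E.
Proof.
move=> r0 ballU; apply: le_ereal_inf_tmp => _ [a Aa <-].
by apply: ereal_sup_ubound; exists r => //; split => //; exact: ballU.
Qed.

End Convexity.

Section Rcone.
Variables (R : realType) (d : nat) (r : R) (K : set 'rV[R]_d).
Hypotheses (r0 : 0 < r) (Ksph : K `<=` @sphere R d).
Local Notation V := 'rV[R]_d.
Local Notation dp := (@dotp R d).
Local Notation en := (@enorm R d).
Local Notation C := (Rcone r K).

Lemma K_unit v : K v -> dp v v = 1.
Proof. by move/Ksph/enorm_unit. Qed.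

Lemma Rcone_ge x v : C x -> K v -> r <= en (x - r *: v).
Proof. by move=> Cx Kv; rewrite leNgt; apply/negP; exact: Cx. Qed.

Lemma RconeP x : C x <-> forall v, K v -> 2 * r * dp x v <= dp x x.
Proof.
have xrv v : K v -> (r <= en (x - r *: v)) = (2 * r * dp x v <= dp x x).
  move=> Kv; rewrite (enorm_ge _ (ltW r0)) dotppB dotpZl !dotpZr (K_unit Kv).
  by apply/idP/idP; lra.
split => [Cx v Kv|xK v Kv]; first by rewrite -xrv // Rcone_ge.
by apply/negP; rewrite -leNgt xrv // xK.
Qed.

Lemma Rcone0 : C 0.
Proof. by apply/RconeP => v Kv; rewrite !dotp0l mulr0. Qed.

Lemma Rcone_dist y x v : C x -> K v -> r - en (y - r *: v) <= en (y - x).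
Proof.
move=> Cx Kv; have := enorm_dist_tri x y (r *: v).
by rewrite (enormB x y); have := Rcone_ge Cx Kv; lra.
Qed.

Lemma polar_Tan t : polar K t -> Tan C 0 t.
Proof.
move=> Kt e e0; have t1 : 0 < en t + 1 by rewrite ltr_wpDl ?enorm_ge0.
set s := e / (en t + 1); have s0 : 0 < s by rewrite divr_gt0.
exists (s *: t); last first.
  exists s^-1; rewrite ?invr_gt0 //.
  by rewrite subr0 scalerA mulVf ?gt_eqF // scale1r subrr enorm0.
split; last first.
  by rewrite subr0 enormZ gtr0_norm // /s mulrAC ltr_pdivrMr // ltr_pM2l // ltrDl.
apply/RconeP => v Kv; rewrite dotpZl mulrA.
apply: le_trans (dotpp_ge0 _) => //.
apply: mulr_ge0_le0; last exact: Kt.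
exact: mulr_ge0 (mulr_ge0 (ler0n _ 2) (ltW r0)) (ltW s0).
Qed.

(* A tangent vector [t] at [o] is approximated by [r' *: x] with [x] in [C] close to
   [o]; as [C] avoids the ball [B(r v)], the component of [r' *: x] along [v] is
   of order [|x| |r' *: x| / r], hence small. *)
Lemma K_sub_Nor : K `<=` Nor C 0.
Proof.
move=> v Kv t Tt; rewrite leNgt; apply/negP => a0; set a := dp v t in a0.
set T := en t; have T0 : 0 <= T := enorm_ge0 t.
set e := Num.min 1 (Num.min (a / 4) (a * r / (2 * (T + 1)))).
have e0 : 0 < e by rewrite !lt_min ltr01 !divr_gt0 ?mulr_gt0 // ltr_wpDl.
have e1 : e <= 1 by rewrite ge_min lexx.
have ea : e <= a / 4 by rewrite /e !ge_min lexx orbT.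
have ear : e * (2 * (T + 1)) <= a * r.
  by rewrite -ler_pdivlMr ?mulr_gt0 ?ltr_wpDl // /e !ge_min lexx !orbT.
have [x [Cx]] := Tt e e0; rewrite !subr0 => xe [r' r'0 rxt].
have lb : a - e < dp v (r' *: x).
  have := cauchy_schwarz v (r' *: x - t).
  rewrite /enorm (K_unit Kv) sqrtr1 mul1r -/(enorm _) dotpBr -/a => vt.
  by have := le_lt_trans vt rxt; rewrite ltr_norml; lra.
have rx : en (r' *: x) <= T + e.
  by have := enormD (r' *: x - t) t; rewrite subrK -/T; lra.
have ub : dp v (r' *: x) <= (T + e) * e / (2 * r).
  have xv : dp x v <= en x ^+ 2 / (2 * r).
    by rewrite ler_pdivlMr ?mulr_gt0 // mulrC enorm_sqr; exact: (RconeP x).1 Cx v Kv.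
  rewrite dotpZr dotpC; apply: le_trans (ler_wpM2l (ltW r'0) xv) _.
  rewrite expr2 !mulrA -(gtr0_norm r'0) -enormZ ler_pM2r ?invr_gt0 ?mulr_gt0 //.
  by apply: ler_pM; rewrite ?enorm_ge0 // ltW.
have : (T + e) * e / (2 * r) <= a / 4.
  rewrite ler_pdivrMr ?mulr_gt0 //.
  have : (T + e) * e <= (T + 1) * e by rewrite ler_pM2r // lerD2l.
  lra.
lra.
Qed.

Lemma mem_K_of_ball (v : V) : eclosed K -> sphere v ->
  (forall x, en (x - r *: v) < r -> ~ C x) -> K v.
Proof.
move=> Kcl /enorm_unit v1 ballC; apply: Kcl => e e0.
set s := Num.min 1 (e ^+ 2).
have s0 : 0 < s by rewrite lt_min ltr01 exprn_gt0.
have s1 : s <= 1 by rewrite ge_min lexx.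
have se : s <= e ^+ 2 by rewrite ge_min lexx orbT.
set c := r * (2 - s); have c0 : 0 < c by rewrite mulr_gt0 // subr_gt0; lra.
have /ballC /RconeP : en (c *: v - r *: v) < r.
  rewrite -scalerBl enormZ /enorm v1 sqrtr1 mulr1 /c ger0_norm; last first.
    by rewrite subr_ge0 ler_pMr //; lra.
  by have := mulr_gt0 r0 s0; lra.
move=> /existsNP [a] /not_implyP [Ka] /negP; rewrite -ltNge !dotpZl !dotpZr v1.
rewrite mulr1 (mulrCA (2 * r)) ltr_pM2l //.
rewrite /c -mulrA (mulrCA 2) ltr_pM2l // (dotpC v a) => sa.
by exists a => //; rewrite enorm_lt ?ltW // dotppB (K_unit Ka) v1; lra.
Qed.

(* [r *: v0 + g] lies on the sphere bounding [B(r v0)]; the polarity hypothesis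
   keeps it outside every other ball [B(r w)]. *)
Lemma Rcone_sphere_point v0 g : K v0 -> en g = r ->
  polar K (g - dp g v0 *: v0) -> C (r *: v0 + g).
Proof.
move=> Kv0 gr gpol; apply/RconeP => w Kw.
have [v01 w1] := (K_unit Kv0, K_unit Kw).
set q := dp w v0; set b := dp g v0.
have q1 : q <= 1 by have := dotp_le_unit w (Ksph Kv0); rewrite /enorm w1 sqrtr1.
have br : - r <= b.
  by have := dotp_ge_unit g (Ksph Kv0); rewrite gr.
have gw : dp g w <= b * q.
  by have := gpol w Kw; rewrite dotpBl dotpZl (dotpC v0 w) -/b -/q; lra.
rewrite dotppD !dotpZl !dotpZr v01 -enorm_sqr gr dotpDl dotpZl.
rewrite (dotpC v0 w) (dotpC v0 g) -/q -/b.
have : 0 <= r * ((1 - q) * (r + b)).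
  by apply: mulr_ge0; [exact: ltW | apply: mulr_ge0; lra].
have : 2 * r * dp g w <= 2 * r * (b * q) by rewrite ler_pM2l ?mulr_gt0.
lra.
Qed.

Section Closed.
Hypotheses (K0 : K !=set0) (Kcl : eclosed K).

Lemma exists_argmax_dotp (y : V) :
  exists2 v0, K v0 & forall w, K w -> dp y w <= dp y v0.
Proof.
apply: (@eclosed_bounded_argmax _ _ _ _ (en y) 1) => // [x /Ksph -> //|x z].
by rewrite -dotpBr cauchy_schwarz.
Qed.

(* Optimality of [v0] along the normalised segments from [v0], which stay in [K]
   by spherical convexity. *)
Lemma argmax_polar y v0 : sph_convex K -> K v0 ->
  (forall w, K w -> dp y w <= dp y v0) -> 0 <= dp y v0 ->
  polar K (y - dp y v0 *: v0).
Proof.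
move=> Kcvx Kv0 v0max m0 v Kv; set m := dp y v0 in m0 *.
rewrite dotpBl dotpZl (dotpC v0 v).
have [v01 v1] := (K_unit Kv0, K_unit Kv).
set D := dp (v - v0) (v - v0).
have DE : D = 2 - 2 * dp v v0 by rewrite /D dotppB v1 v01; ring.
suff : dp y v - m + m * D / 2 <= 0 by rewrite DE; lra.
apply: (@le0_of_small_multiples _ _ (m * D / 2)) => s s0 s2.
set w := (1 - s) *: v0 + s *: v.
have vv0 : -1 <= dp v v0.
  by have := dotp_ge_unit v (Ksph Kv0); rewrite (Ksph Kv).
have wv0 : 0 < dp w v0.
  have : 0 <= s * (dp v v0 + 1) by apply: mulr_ge0; [exact: ltW | lra].
  by rewrite /w dotpDl !dotpZl v01; lra.
have wn0 : w != 0 by apply: contraTneq wv0 => ->; rewrite dotp0l ltxx.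
have w0 : 0 < en w by rewrite lt_def enorm_eq0 wn0 enorm_ge0.
have s01 : 0 <= s <= 1 by apply/andP; split; lra.
have := v0max _ (sph_convex_normalize Kcvx Kv0 Kv s01 wn0).
rewrite dotpZr mulrC ler_pdivrMr // -/m -/w => yw.
have w2 : dp w w = 1 - s * (1 - s) * D.
  by rewrite /w dotppD !dotpZl !dotpZr v01 v1 (dotpC v0 v) DE; ring.
have wle : en w <= (1 + dp w w) / 2.
  by have := sqr_ge0 (en w - 1); rewrite -enorm_sqr; nra.
have yE : dp y w = (1 - s) * m + s * dp y v by rewrite /w dotpDr !dotpZr.
have : m * en w <= m * ((1 + dp w w) / 2) by rewrite ler_wpM2l.
rewrite w2 yE in yw * => mw.
have : s * (dp y v - m + m * D / 2) <= s * (s * (m * D / 2)) by lra.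
by rewrite ler_pM2l // mulrA [s * _]mulrC.
Qed.

Lemma Nor_sub_K : sph_convex K -> Nor C 0 `&` @sphere R d `<=` K.
Proof.
move=> Kcvx u [uN /enorm_unit u1].
have [v0 Kv0 v0max] := exists_argmax_dotp u.
have v01 := K_unit Kv0; set m := dp u v0 in v0max *.
have [m0|m0] := leP m 0.
  have /uN : Tan C 0 u.
    by apply: polar_Tan => v Kv; exact: le_trans (v0max v Kv) m0.
  by rewrite u1 ler10.
have /polar_Tan/uN := argmax_polar Kcvx Kv0 v0max (ltW m0).
rewrite dotpBr dotpZr u1 -/m => m1.
have m_le1 : m <= 1.
  by have := dotp_le_unit u (Ksph Kv0); rewrite /enorm u1 sqrtr1.
have /eqP : dp (u - v0) (u - v0) = 0 by rewrite dotppB u1 v01 -/m; nra.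
by rewrite dotpp_eq0 subr_eq0 => /eqP ->.
Qed.

Lemma Unp_Rcone a y : sph_convex K -> C a -> en (y - a) < r -> Unp C y.
Proof.
move=> Kcvx Ca ya; have [Cy|Cy] := pselect (C y); first exact: Unp_mem.
have : ~ (forall v, K v -> 2 * r * dp y v <= dp y y) by move/RconeP.
move=> /existsNP [v] /not_implyP [Kv] /negP; rewrite -ltNge => yv.
have [v0 Kv0 v0max] := exists_argmax_dotp y; set m := dp y v0 in v0max.
have m0 : 0 < m.
  have : 0 < 2 * r * dp y v by exact: le_lt_trans (dotpp_ge0 y) yv.
  by rewrite pmulr_rgt0 ?mulr_gt0 // => /lt_le_trans; apply; exact: v0max.
set b := y - r *: v0; set t := en b.
have yE : y = r *: v0 + b by rewrite /b addrC subrK.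
have t0 : 0 < t by have := Rcone_dist y Ca Kv0; rewrite -/b -/t; lra.
have tr : t < r.
  rewrite /t enorm_lt ?ltW // /b dotppB dotpZr dotpZl dotpZr (K_unit Kv0) -/m.
  have : 2 * r * dp y v <= 2 * r * m by rewrite ler_pM2l ?mulr_gt0 // v0max.
  lra.
set g := (r / t) *: b.
have Cg : C (r *: v0 + g).
  apply: Rcone_sphere_point => //.
    by rewrite enormZ ger0_norm ?divr_ge0 ?ltW // divfK ?gt_eqF.
  have -> : g - dp g v0 *: v0 = (r / t) *: (y - m *: v0).
    rewrite /g dotpZl -(scalerA (r / t)) -scalerBr; congr (_ *: _).
    by rewrite /b dotpBl dotpZl (K_unit Kv0) mulr1 scalerBl opprB addrA subrK.
  by apply: polarZ; [rewrite divr_ge0 ?ltW | exact: argmax_polar (ltW m0)].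
have yg : en (y - (r *: v0 + g)) = r - t.
  have -> : y - (r *: v0 + g) = (1 - r / t) *: b.
    by rewrite yE /g; apply/rowP => i; rewrite !mxE; ring.
  rewrite enormZ ler0_norm; last by rewrite subr_le0 ler_pdivlMr // mul1r ltW.
  by rewrite -/t opprB mulrBl divfK ?gt_eqF // mul1r.
exists (r *: v0 + g); split; first by split => // c Cc; rewrite yg Rcone_dist.
move=> c [Cc /(_ _ Cg)]; rewrite yg => cy.
have cyE : en (c - y) = r - t.
  by apply/eqP; rewrite eq_le enormB cy (Rcone_dist _ Cc Kv0).
have : en (c - y) + en b <= en (c - y + b).
  by rewrite /b addrA subrK cyE -/t subrK Rcone_ge.
move=> /enormD_eq /(_ t0); rewrite cyE -/t => cyb.
have -> : c = y + (c - y) by rewrite addrC subrK.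
rewrite cyb {1}yE -addrA /g; congr (_ + _).
by rewrite -{2}(scale1r b) -scalerDl; congr (_ *: _); field; rewrite gt_eqF.
Qed.

Local Notation hull := (eclosure (conv K)).

Lemma hull_halfspace (a : V) c : (forall v, K v -> dp a v <= c) ->
  forall q, hull q -> dp a q <= c.
Proof.
move=> aK; apply: (eclosure_sub (@halfspace_eclosed _ _ a c)).
exact: conv_sub (@halfspace_convex _ _ a c) aK.
Qed.

Lemma hull_enorm q : hull q -> en q <= 1.
Proof.
move=> Hq; have := hull_halfspace (fun v Kv => dotp_le_unit q (Ksph Kv)) Hq.
by rewrite -enorm_sqr; have := enorm_ge0 q; nra.
Qed.

Lemma hull_Rcone x q : C x -> hull q -> 2 * r * dp x q <= dp x x.
Proof.
move=> Cx; rewrite -dotpZl; apply: hull_halfspace => v Kv.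
by rewrite dotpZl; exact: (RconeP x).1 Cx v Kv.
Qed.

Lemma hull_unit_mem q : hull q -> dp q q = 1 -> K q.
Proof.
move=> Hq q1; apply: Kcl => e e0; set e' := e ^+ 2 / 4.
have e'0 : 0 < e' by rewrite divr_gt0 ?exprn_gt0.
have : ~ (forall v, K v -> dp q v <= 1 - e').
  by move/hull_halfspace/(_ q Hq); rewrite q1; lra.
move=> /existsNP [v] /not_implyP [Kv] /negP; rewrite -ltNge => qv.
exists v => //; rewrite enorm_lt ?ltW // dotppB (K_unit Kv) q1 (dotpC v q).
by rewrite /e' in qv; have := exprn_gt0 2 e0; lra.
Qed.

Lemma exists_nearest_hull (z : V) :
  exists2 p, hull p & forall x, hull x -> en (z - p) <= en (z - x).
Proof.
have [v0 Kv0] := K0.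
have [|p Hp pmax] := @eclosed_bounded_argmax _ _ hull (fun x => - en (z - x)) 1 1
  (ex_intro _ v0 (sub_eclosure (sub_conv Kv0))) (@eclosure_eclosed _ _ _) hull_enorm.
  move=> x y; rewrite mul1r opprK addrC ler_norml.
  have := enorm_dist_tri z x y; have := enorm_dist_tri z y x; rewrite (enormB y x).
  by move=> zyx zxy; apply/andP; split; lra.
by exists p => // x /pmax; lra.
Qed.

(* [0] and [c *: n] are two nearest points of [C] to [r *: p]. *)
Lemma not_Unp_Rcone p n : (forall x, C x -> 2 * r * dp x p <= dp x x) ->
  0 < dp n p -> (forall v, K v -> dp n v <= dp n p) -> ~ Unp C (r *: p).
Proof.
move=> pC; set be := dp n p => be0 nK.
have n0 : 0 < dp n n.
  by apply: dotpp_gt0; apply: contraTneq be0 => n0; rewrite /be n0 dotp0l ltxx.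
set c := 2 * r * be / dp n n; have c0 : 0 < c by rewrite !divr_gt0 ?mulr_gt0.
set q := c *: n.
have qq : dp q q = c * (2 * r * be).
  by rewrite /q dotpZl dotpZr /c; field; rewrite gt_eqF.
have Cq : C q.
  apply/RconeP => v Kv; rewrite qq /q dotpZl mulrCA ler_pM2l //.
  by rewrite ler_pM2l ?mulr_gt0 // nK.
have near0 x : C x -> en (r *: p - 0) <= en (r *: p - x).
  move=> Cx; rewrite subr0 ler_enorm dotppB !dotpZl !dotpZr (dotpC p x).
  by have := pC x Cx; lra.
have qfar : en (r *: p - q) = en (r *: p - 0).
  rewrite /enorm subr0 dotppB qq /q !dotpZl !dotpZr (dotpC p n) -/be.
  by congr Num.sqrt; ring.
move=> [a [[Ca amin] auniq]].
have a0 : a = 0 by apply: auniq; split; [exact: Rcone0 | exact: near0].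
have aq : a = q by apply: auniq; split => // x /near0; rewrite qfar.
have : 0 < dp q q by rewrite qq mulr_gt0 // !mulr_gt0.
by rewrite -aq a0 dotp0l ltxx.
Qed.

Lemma reach_sph_convex : (r%:E <= reach C)%E -> sph_convex K.
Proof.
move=> rreach; apply: sph_convexW => // z [zc /enorm_unit z1].
have [a a0 [k kc zE]] := conv_pos_hull_scale zc.
have a_gt0 : 0 < a.
  rewrite lt_def a0 andbT; apply/eqP => a_eq0.
  by move: z1; rewrite zE a_eq0 scale0r dotp0l => /eqP; rewrite eq_sym oner_eq0.
have Hz : hull (a^-1 *: z).
  by rewrite zE scalerA mulVf ?gt_eqF // scale1r; exact: sub_eclosure.
have ai0 : 0 < a^-1 by rewrite invr_gt0.
apply: contrapT => nKz.
have [p Hp pmin] := exists_nearest_hull z.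
have obt := nearest_point_obtuse (convex_eclosure (@conv_convex _ _ K)) Hp pmin.
have pz : dp p z <= en p := dotp_le_unit p ((enorm_unit z).2 z1).
have pn1 : en p < 1.
  rewrite lt_neqAle hull_enorm // andbT; apply/eqP => pE.
  have p1 : dp p p = 1 by rewrite -enorm_sqr pE expr1n.
  have : 0 < dp (z - p) (z - p).
    apply: dotpp_gt0; rewrite subr_eq0; apply/eqP => zp.
    by apply: nKz; rewrite zp; exact: hull_unit_mem.
  have := obt _ Hz; rewrite dotppB z1 p1 !dotpBl !dotpBr !dotpZr z1 p1 (dotpC z p).
  nra.
set n := z - p.
have be0 : 0 < dp n p.
  have := obt _ Hz; rewrite dotpBr dotpZr -/n.
  have : 0 < dp n z by rewrite /n dotpBl z1; lra.
  nra.
have nK v : K v -> dp n v <= dp n p.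
  by move=> Kv; have := obt v (sub_eclosure (sub_conv Kv)); rewrite dotpBr -/n; lra.
have /(reach_le_dist Rcone0) := not_Unp_Rcone (fun x Cx => hull_Rcone Cx Hp) be0 nK.
move/(le_trans rreach); rewrite lee_fin subr0 enormZ gtr0_norm //.
by rewrite ler_pMr // leNgt pn1.
Qed.

End Closed.
End Rcone.

Theorem mainTheorem17 (R : realType) (d : nat) (r : R) (K : set 'rV[R]_d) :
  0 < r ->
  K !=set0 -> eclosed K -> K `<=` @sphere R d ->
  (exists2 w, (@sphere R d) w & forall v, K v -> 0 <= dotp v w) ->
  let N := Nor (Rcone r K) 0 `&` @sphere R d in
  [/\ (sph_convex K <-> (r%:E <= reach (Rcone r K))%E),
      ((r%:E <= reach (Rcone r K))%E <-> Rcone r K = Rcone r N) &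
      (Rcone r K = Rcone r N <-> sph_convex K)].
Proof.
move=> r0 K0 Kcl Ksph _ N.
have KN : K `<=` N by move=> v Kv; split; [exact: K_sub_Nor | exact: Ksph].
have cvx_N : sph_convex K -> K = N.
  by move=> Kcvx; apply/seteqP; split => //; exact: Nor_sub_K.
have cone_cvx : Rcone r K = Rcone r N -> sph_convex K.
  move=> CKN; suff -> : K = N by exact: sph_convex_Nor.
  apply/seteqP; split => // u [uN usph]; apply: (mem_K_of_ball r0) => // x xu.
  by rewrite CKN => /(_ u (conj uN usph)); apply.
have cvx_reach : sph_convex K -> (r%:E <= reach (Rcone r K))%E.
  by move=> Kcvx; apply: reach_ge => // a Ca y; exact: Unp_Rcone.
have reach_cvx := reach_sph_convex r0 Ksph K0 Kcl.
split; split; [exact: cvx_reach | exact: reach_cvx | | | exact: cone_cvx |].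
- by move=> /reach_cvx /cvx_N <-.
- by move=> /cone_cvx; exact: cvx_reach.
- by move=> /cvx_N <-.
Qed.
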